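(* Let $\alpha\in(0,1)$, $a,b\in\mathbb{R}$, $\tau>0$, and $Q(s)=s^\alpha-a-b e^{-s\tau}$ with the principal branch of $s^\alpha$ (and $0^\alpha=0$). If $a\le b<-a$, then $Q(s)=0$ has no root $s$ with $\operatorname{Re}s\ge 0$.
   Context: $s^\alpha=|s|^\alpha e^{i\alpha\arg s}$ with $\arg s\in(-\pi,\pi]$ restricted to $\operatorname{Re}s\ge0$, i.e. $\arg s\in[-\pi/2,\pi/2]$. *)

From Stdlib Require Import Reals.
Open Scope R_scope.

Record Cx : Type := mkCx { Re : R ; Im : R }.

Definition Cadd (z w : Cx) : Cx := mkCx (Re z + Re w) (Im z + Im w).
Definition Csub (z w : Cx) : Cx := mkCx (Re z - Re w) (Im z - Im w).
Definition Cmul (z w : Cx) : Cx :=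
  mkCx (Re z * Re w - Im z * Im w) (Re z * Im w + Im z * Re w).
Definition RtoC (x : R) : Cx := mkCx x 0.
Definition C0 : Cx := mkCx 0 0.

Definition Cmod (z : Cx) : R := sqrt (Re z ^ 2 + Im z ^ 2).

(* principal argument, with values in (-PI, PI]; Carg 0 = 0 *)
Definition Carg (z : Cx) : R :=
  let x := Re z in let y := Im z in
  if Rlt_dec 0 x then atan (y / x)
  else if Rlt_dec x 0 then
    (if Rle_dec 0 y then atan (y / x) + PI else atan (y / x) - PI)
  else
    if Rlt_dec 0 y then PI / 2
    else if Rlt_dec y 0 then - (PI / 2) else 0.

Definition Cexp (z : Cx) : Cx :=
  mkCx (exp (Re z) * cos (Im z)) (exp (Re z) * sin (Im z)).

Definition Cpow (z : Cx) (alpha : R) : Cx :=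
  if Rlt_dec 0 (Cmod z) then
    mkCx (Rpower (Cmod z) alpha * cos (alpha * Carg z))
         (Rpower (Cmod z) alpha * sin (alpha * Carg z))
  else C0.

Definition Qchar (alpha a b tau : R) (s : Cx) : Cx :=
  Csub (Csub (Cpow s alpha) (RtoC a))
       (Cmul (RtoC b) (Cexp (Cmul (RtoC (- tau)) s))).

(* On the closed right half-plane the principal argument lies in [-PI/2, PI/2], so for
   0 < alpha < 1 the power s^alpha has positive real part unless s = 0.  The delay term
   b e^{-s tau} has real part in [-|b|, |b|] and |b| <= -a, hence Re Q(s) >= Re s^alpha >= 0,
   with Re Q(s) > 0 since the case s = 0 gives Q(0) = -(a + b) > 0. *)
From Stdlib Require Import Reals Lra Psatz.
Open Scope R_scope.

Lemma Carg_right_half_plane (s : Cx) : 0 <= Re s -> - (PI / 2) <= Carg s <= PI / 2.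
Proof.
  intros Hs; unfold Carg.
  pose proof (atan_bound (Im s / Re s)); pose proof PI_RGT_0.
  destruct (Rlt_dec 0 (Re s)); [lra|].
  destruct (Rlt_dec (Re s) 0); [lra|].
  destruct (Rlt_dec 0 (Im s)); [lra|].
  destruct (Rlt_dec (Im s) 0); lra.
Qed.

Lemma Cmod_eq0 (z : Cx) : Cmod z = 0 -> Re z = 0 /\ Im z = 0.
Proof.
  unfold Cmod; intros Hz.
  apply sqrt_eq_0 in Hz; [|nra].
  split; nra.
Qed.

Lemma Cpow_Re_gt0 (s : Cx) (alpha : R) :
  -1 < alpha < 1 -> 0 <= Re s -> 0 < Cmod s -> 0 < Re (Cpow s alpha).
Proof.
  intros Halpha Hs Hmod; unfold Cpow.
  destruct (Rlt_dec 0 (Cmod s)) as [_|]; [simpl|lra].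
  pose proof (Carg_right_half_plane s Hs); pose proof PI_RGT_0.
  apply Rmult_lt_0_compat; [apply exp_pos|].
  apply cos_gt_0; destruct (Rle_dec 0 alpha); nra.
Qed.

Lemma Cpow_Re_ge0 (s : Cx) (alpha : R) :
  -1 < alpha < 1 -> 0 <= Re s -> 0 <= Re (Cpow s alpha).
Proof.
  intros Halpha Hs.
  destruct (Rlt_dec 0 (Cmod s)) as [Hmod|Hmod].
  - now left; apply Cpow_Re_gt0.
  - unfold Cpow; destruct (Rlt_dec 0 (Cmod s)); [lra|simpl; lra].
Qed.

Lemma Re_Qchar (alpha a b tau : R) (s : Cx) :
  Re (Qchar alpha a b tau s)
  = Re (Cpow s alpha) - a - b * (exp (- tau * Re s) * cos (tau * Im s)).
Proof.
  unfold Qchar, Csub, Cmul, Cexp, RtoC; simpl.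
  replace (- tau * Re s - 0 * Im s) with (- tau * Re s) by ring.
  replace (- tau * Im s + 0 * Re s) with (- (tau * Im s)) by ring.
  rewrite cos_neg; ring.
Qed.

Lemma damped_cos_bound (tau x y : R) :
  0 <= tau -> 0 <= x -> -1 <= exp (- tau * x) * cos y <= 1.
Proof.
  intros Htau Hx.
  assert (He : 0 < exp (- tau * x) <= 1).
  { split; [apply exp_pos|].
    assert (Harg : - tau * x <= 0) by nra.
    rewrite <- exp_0; destruct (Rle_lt_or_eq_dec _ _ Harg) as [Hlt|Heq].
    - now left; apply exp_increasing.
    - now rewrite Heq; right. }
  pose proof (COS_bound y); nra.
Qed.

Lemma opp_sub_mul_bounded_ge0 (a b w : R) :
  a <= b -> b < - a -> -1 <= w <= 1 -> 0 <= - a - b * w.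
Proof.
  intros Hab Hba [Hw1 Hw2].
  destruct (Rle_dec 0 b) as [Hb|Hb].
  - pose proof (Rmult_le_pos (1 - w) b ltac:(lra) Hb); nra.
  - pose proof (Rmult_le_pos (w + 1) (- b) ltac:(lra) ltac:(lra)); nra.
Qed.

Lemma Qchar_Re_gt0 (alpha a b tau : R) (s : Cx) :
  0 < alpha < 1 -> 0 < tau -> a <= b -> b < - a -> 0 <= Re s ->
  0 < Re (Qchar alpha a b tau s).
Proof.
  intros Halpha Htau Hab Hba Hs; rewrite Re_Qchar.
  pose proof (damped_cos_bound tau (Re s) (tau * Im s) (Rlt_le _ _ Htau) Hs) as Hw.
  set (w := exp (- tau * Re s) * cos (tau * Im s)) in *.
  pose proof (opp_sub_mul_bounded_ge0 a b w Hab Hba Hw) as Hdelay.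
  destruct (Rlt_dec 0 (Cmod s)) as [Hmod|Hmod].
  - pose proof (Cpow_Re_gt0 s alpha ltac:(lra) Hs Hmod); lra.
  - assert (Hs0 : Re s = 0 /\ Im s = 0).
    { apply Cmod_eq0; pose proof (sqrt_pos (Re s ^ 2 + Im s ^ 2)); unfold Cmod in *; lra. }
    assert (Hw1 : w = 1).
    { unfold w; destruct Hs0 as [-> ->].
      rewrite Rmult_0_r, Rmult_0_r, exp_0, cos_0; ring. }
    pose proof (Cpow_Re_ge0 s alpha ltac:(lra) Hs); rewrite Hw1; lra.
Qed.

Theorem lemma3p2 (alpha a b tau : R) :
  0 < alpha < 1 -> 0 < tau -> a <= b -> b < - a ->
  forall s : Cx, 0 <= Re s -> Qchar alpha a b tau s <> C0.
Proof.
  intros Halpha Htau Hab Hba s Hs HQ.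
  pose proof (Qchar_Re_gt0 alpha a b tau s Halpha Htau Hab Hba Hs) as Hpos.
  rewrite HQ in Hpos; simpl in Hpos; lra.
Qed.
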